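(* Let $W$ be an irreducible euclidean Coxeter group not of type $\widetilde A_n$ and $\sigma$ a chamber of its Coxeter complex with closest points $x_0,x_1$, bipartite line $L$ and bipartite involutions $w_0,w_1$. Then for $i\in\{0,1\}$, $w_i$ stabilizes $L$ and restricts to a reflection of $L$ fixing only the point $x_i$.
   Context: $W$ acts on a euclidean space $E$, generated by reflections in the facets of a euclidean simplex with dihedral angles submultiples of $\pi$, properly and cocompactly; chambers are images of the simplex. The diagram $\Gamma$ (a tree) has a unique bipartition, giving a partition $S_0\sqcup S_1$ of the reflections in the facets of $\sigma$ into pairwise-commuting sets; the bipartite involution $w_j$ is the product of the reflections in $S_j$. $F_j$ is the face of $\sigma$ cut out by the hyperplanes of the reflections in $S_j$, $B_j$ its affine hull; $x_0\in B_0$, $x_1\in B_1$ are the unique points realizing the distance between $B_0$ and $B_1$, and $L$ is the line through them. *)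

From HB Require Import structures.
From mathcomp Require Import all_boot all_order all_algebra all_fingroup.
From mathcomp Require Import all_classical all_reals all_analysis.
Set Implicit Arguments. Unset Strict Implicit. Unset Printing Implicit Defensive.
Import Order.TTheory GRing.Theory Num.Theory.
Local Open Scope classical_set_scope.
Local Open Scope ring_scope.

Section CoxeterDefs.
Variable R : realType.
Variable n : nat.
Implicit Types (x y : 'rV[R]_n) (v u : 'I_n.+1 -> 'rV[R]_n) (c : 'I_n.+1 -> R)
  (m : 'I_n.+1 -> 'I_n.+1 -> nat).

Definition dot x y : R := (x *m y^T) 0 0.
Definition eucl_dist x y : R := Num.sqrt (dot (x - y) (x - y)).

Definition affinely_independent v :=
  forall l : 'I_n.+1 -> R, \sum_k l k = 0 -> \sum_k l k *: v k = 0 ->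
  forall k, l k = 0.

Definition simplex_hull v : set 'rV[R]_n :=
  [set x | exists l : 'I_n.+1 -> R,
     (forall k, 0 <= l k) /\ \sum_k l k = 1 /\ x = \sum_k l k *: v k].

(* u i is the outward unit normal of the facet opposite to vertex i, and the
   hyperplane of that facet is {x | dot x (u i) = c i} *)
Definition facet_normals v u c :=
  forall i, dot (u i) (u i) = 1 /\
    (forall k, k != i -> dot (v k) (u i) = c i) /\ dot (v i) (u i) < c i.

Definition dihedral_angle u i j : R := acos (- dot (u i) (u j)).

Definition coxeter_angles u m :=
  forall i j, i != j -> (2 <= m i j)%N /\ dihedral_angle u i j = pi / (m i j)%:R.

(* orthogonal reflection in the hyperplane {x | dot x a = b}, a a unit vector *)
Definition refl (a : 'rV[R]_n) (b : R) x : 'rV[R]_n := x - (2 * (dot x a - b)) *: a.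

Definition diagram m : rel 'I_n.+1 := fun i j => (i != j) && (3 <= m i j)%N.

Definition irreducible_diagram m := forall i j, connect (diagram m) i j.

(* W of type tilde A_n (n >= 2): Gamma is a cycle through all vertices, all labels 3 *)
Definition type_tildeA m :=
  (2 <= n)%N /\ exists p : {perm 'I_n.+1}, forall i j, i != j ->
    m (p i) (p j) = (if (j == ordS i) || (i == ordS j) then 3 else 2)%N.

Definition is_bipartition m (S0 : {set 'I_n.+1}) :=
  forall i j, diagram m i j -> (i \in S0) != (j \in S0).

Definition face v u c (S : {set 'I_n.+1}) : set 'rV[R]_n :=
  [set x | simplex_hull v x /\ forall i, i \in S -> dot x (u i) = c i].

Definition affine_hull (A : set 'rV[R]_n) : set 'rV[R]_n :=
  [set x | exists (k : nat) (p : 'I_k -> 'rV[R]_n) (l : 'I_k -> R),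
     (forall t, A (p t)) /\ \sum_t l t = 1 /\ x = \sum_t l t *: p t].

Definition bip_inv u c (S : {set 'I_n.+1}) : 'rV[R]_n -> 'rV[R]_n :=
  foldr (fun i f => refl (u i) (c i) \o f) id (enum S).

Definition line_through x0 x1 : set 'rV[R]_n :=
  [set x0 + t *: (x1 - x0) | t in [set: R]].

Definition restricts_to_reflection_fixing (w : 'rV[R]_n -> 'rV[R]_n)
  (L : set 'rV[R]_n) (p : 'rV[R]_n) :=
  w @` L = L /\ (forall y, L y -> w y = 2 *: p - y) /\
  [set y | L y /\ w y = y] = [set p].

End CoxeterDefs.

(** Since the diagram is bipartite, two reflections of the same class [S] never
    meet along an edge, so their dihedral angle is [pi/2]: the unit normals
    [u i], [i \in S], are pairwise orthogonal and [w_S] is the orthogonal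
    reflection through the flat [{z | dot z (u i) = c i, i \in S}], which is the
    affine hull [B_S] of the face cut out by [S].  At a nearest pair, [x1 - x0]
    is orthogonal to both flats, i.e. it lies in the span of the normals of
    [S0] and in that of [~: S0].  Hence [w_0] fixes [x0] and reverses the
    direction of [L], so it acts on [L] as the point reflection at [x0], and
    symmetrically for [w_1] and [x1].  Irreducibility and the exclusion of type
    [tilde A_n] are used in the paper only to ensure that the nearest pair
    exists and is unique; here it is a hypothesis. *)
From HB Require Import structures.
From mathcomp Require Import all_boot all_order all_algebra all_fingroup.
From mathcomp Require Import all_classical all_reals all_analysis.
From mathcomp Require Import lra ring.
Import Order.TTheory GRing.Theory Num.Theory.
Set Implicit Arguments. Unset Strict Implicit.
Local Open Scope classical_set_scope.
Local Open Scope ring_scope.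

Section InnerProduct.
Variables (R : realType) (n : nat).
Implicit Types (x y z : 'rV[R]_n).

Lemma dotE x y : dot x y = \sum_j x 0 j * y 0 j.
Proof. by rewrite /dot !mxE; apply: eq_bigr => j _; rewrite mxE. Qed.

Lemma dotC x y : dot x y = dot y x.
Proof. by rewrite !dotE; apply: eq_bigr => j _; rewrite mulrC. Qed.

Lemma dotDl x y z : dot (x + y) z = dot x z + dot y z.
Proof. by rewrite !dotE -big_split; apply: eq_bigr => j _; rewrite mxE mulrDl. Qed.

Lemma dotZl (a : R) x z : dot (a *: x) z = a * dot x z.
Proof. by rewrite !dotE mulr_sumr; apply: eq_bigr => j _; rewrite mxE mulrA. Qed.

Lemma dotNl x z : dot (- x) z = - dot x z.
Proof. by rewrite -scaleN1r dotZl mulN1r. Qed.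

Lemma dotBl x y z : dot (x - y) z = dot x z - dot y z.
Proof. by rewrite dotDl dotNl. Qed.

Lemma dot_suml (I : Type) (r : seq I) (P : pred I) (F : I -> 'rV[R]_n) z :
  dot (\sum_(i <- r | P i) F i) z = \sum_(i <- r | P i) dot (F i) z.
Proof.
elim/big_rec2: _ => [|i y1 y2 _ <-]; last by rewrite dotDl.
by rewrite -(scale0r (0 : 'rV[R]_n)) dotZl mul0r.
Qed.

Lemma dotDD x y : dot (x + y) (x + y) = dot x x + 2 * dot x y + dot y y.
Proof. rewrite dotDl (dotC x) (dotC y) !dotDl (dotC y x); lra. Qed.

Lemma dotNN x : dot (- x) (- x) = dot x x.
Proof. by rewrite dotNl dotC dotNl opprK. Qed.

Lemma dot_ge0 x : 0 <= dot x x.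
Proof. by rewrite dotE sumr_ge0 // => j _; rewrite -expr2 sqr_ge0. Qed.

Lemma dot_eq0 x : dot x x = 0 -> x = 0.
Proof.
rewrite dotE => /eqP; rewrite psumr_eq0 => [/allP x0|j _]; last first.
  by rewrite -expr2 sqr_ge0.
apply/rowP => j; rewrite mxE; have := x0 j (mem_index_enum j).
by rewrite /= -expr2 sqrf_eq0 => /eqP.
Qed.

Lemma dot_unit_itv x y : dot x x = 1 -> dot y y = 1 -> -1 <= - dot x y <= 1.
Proof.
move=> x1 y1; have := dot_ge0 (x + y); have := dot_ge0 (x + - y).
rewrite !dotDD dotNN (dotC x (- y)) dotNl (dotC y x) x1 y1.
by move=> *; apply/andP; split; lra.
Qed.

Lemma eucl_dist_le x y x' y' :
  eucl_dist x y <= eucl_dist x' y' -> dot (x - y) (x - y) <= dot (x' - y') (x' - y').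
Proof. by rewrite /eucl_dist ler_sqrt // dot_ge0. Qed.

End InnerProduct.

Section BipartiteInvolution.
Variables (R : realType) (n : nat) (u : 'I_n.+1 -> 'rV[R]_n) (c : 'I_n.+1 -> R).

Definition pairwise_orthogonal (S : {set 'I_n.+1}) :=
  forall i j, i \in S -> j \in S -> i != j -> dot (u i) (u j) = 0.

Lemma foldr_refl_orthogonal (S : {set 'I_n.+1}) (s : seq 'I_n.+1) z :
  pairwise_orthogonal S -> uniq s -> {subset s <= S} ->
  foldr (fun i f => refl (u i) (c i) \o f) id s z =
    z - \sum_(i <- s) (2 * (dot z (u i) - c i)) *: u i.
Proof.
move=> orthS; elim: s => [|i s IHs] /=; first by rewrite big_nil subr0.
case/andP=> i_notin_s uniq_s sS.
have iS : i \in S by apply: sS; rewrite inE eqxx.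
rewrite IHs /refl // => [|j js]; last by apply: sS; rewrite inE js orbT.
have -> : dot (z - \sum_(j <- s) (2 * (dot z (u j) - c j)) *: u j) (u i)
          = dot z (u i).
  rewrite dotBl dot_suml big_seq big1 ?subr0 // => j js.
  rewrite dotZl orthS ?mulr0 //; first by apply: sS; rewrite inE js orbT.
  by apply: contraNneq i_notin_s => <-.
by rewrite big_cons opprD addrA addrAC.
Qed.

Lemma bip_inv_orthogonal (S : {set 'I_n.+1}) z : pairwise_orthogonal S ->
  bip_inv u c S z = z - \sum_(i in S) (2 * (dot z (u i) - c i)) *: u i.
Proof.
move=> orthS; rewrite /bip_inv (foldr_refl_orthogonal _ orthS) ?enum_uniq //.
  by rewrite big_enum.
by move=> j; rewrite mem_enum.
Qed.

Lemma bip_inv_normal_line (S : {set 'I_n.+1}) (a b z : 'rV[R]_n) (t : R) :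
  pairwise_orthogonal S -> (forall i, i \in S -> dot a (u i) = c i) ->
  b - a = \sum_(i in S) (dot b (u i) - c i) *: u i ->
  z = a + t *: (b - a) -> bip_inv u c S z = 2 *: a - z.
Proof.
move=> orthS a_flat ba_normal ->; rewrite bip_inv_orthogonal //.
have -> : \sum_(i in S) (2 * (dot (a + t *: (b - a)) (u i) - c i)) *: u i
          = (2 * t) *: (b - a).
  rewrite [in RHS]ba_normal scaler_sumr; apply: eq_bigr => i iS; rewrite scalerA.
  by congr (_ *: _); rewrite dotDl dotZl dotBl a_flat //; ring.
by apply/rowP => j; rewrite !mxE; ring.
Qed.

End BipartiteInvolution.

Lemma bipartition_pairwise_orthogonal (R : realType) (n : nat)
    (u : 'I_n.+1 -> 'rV[R]_n) (m : 'I_n.+1 -> 'I_n.+1 -> nat)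
    (S0 S : {set 'I_n.+1}) :
  (forall i, dot (u i) (u i) = 1) -> coxeter_angles u m ->
  is_bipartition m S0 -> {in S &, forall i j, (i \in S0) = (j \in S0)} ->
  pairwise_orthogonal u S.
Proof.
move=> unit_u angles bip sameS i j iS jS ij.
have [m_ge2 angle_ij] := angles i j ij.
have m_eq2 : m i j = 2%N.
  have : ~~ diagram m i j by apply/negP => /bip; rewrite (sameS i j iS jS) eqxx.
  by rewrite /diagram ij /= -ltnNge ltnS => m_le2; apply/eqP; rewrite eqn_leq m_le2.
move: angle_ij; rewrite /dihedral_angle m_eq2 => angle_ij.
have := congr1 cos angle_ij; rewrite acosK ?cos_pihalf; last first.
  by rewrite in_itv /= dot_unit_itv.
by move/eqP; rewrite oppr_eq0 => /eqP.
Qed.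

Section FaceHull.
Variables (R : realType) (n : nat) (v u : 'I_n.+1 -> 'rV[R]_n) (c : 'I_n.+1 -> R).
Hypotheses (indep_v : affinely_independent v) (normals : facet_normals v u c).

Lemma barycentric_coords (z : 'rV[R]_n) :
  exists l : 'I_n.+1 -> R, \sum_k l k = 1 /\ z = \sum_k l k *: v k.
Proof.
pose M : 'M[R]_(n.+1, 1 + n) :=
  \matrix_(k, j) (row_mx (const_mx 1 : 'rV[R]_1) (v k)) 0 j.
have M_left (w : 'rV[R]_n.+1) : (w *m M) 0 (lshift n 0) = \sum_k w 0 k.
  by rewrite mxE; apply: eq_bigr => k _; rewrite mxE row_mxEl mxE mulr1.
have M_right (w : 'rV[R]_n.+1) j :
    (w *m M) 0 (rshift 1 j) = (\sum_k w 0 k *: v k) 0 j.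
  by rewrite mxE summxE; apply: eq_bigr => k _; rewrite mxE row_mxEr mxE.
have M_unit : M \in unitmx.
  rewrite -row_free_unit -kermx_eq0; apply/rowV0P => w /sub_kermxP wM0.
  have sum_w : \sum_k w 0 k = 0 by rewrite -M_left wM0 mxE.
  have comb_w : \sum_k w 0 k *: v k = 0 by apply/rowP => j; rewrite -M_right wM0 !mxE.
  by apply/rowP => k; rewrite mxE (indep_v sum_w comb_w).
pose w := row_mx (const_mx 1 : 'rV[R]_1) z *m invmx M.
have wM : w *m M = row_mx (const_mx 1) z by rewrite mulmxKV.
exists (fun k => w 0 k); split; first by rewrite -M_left wM row_mxEl mxE.
by apply/rowP => j; rewrite -M_right wM row_mxEr.
Qed.

Lemma affine_hull_face_dot (S : {set 'I_n.+1}) (x : 'rV[R]_n) i :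
  affine_hull (face v u c S) x -> i \in S -> dot x (u i) = c i.
Proof.
move=> [k [p [l [face_p [sum_l ->]]]]] iS.
rewrite dot_suml (eq_bigr (fun t => l t * c i)); last first.
  by move=> t _; rewrite dotZl; have [_ ->] := face_p t.
by rewrite -mulr_suml sum_l mul1r.
Qed.

Lemma vertex_in_face (S : {set 'I_n.+1}) t : t \notin S -> face v u c S (v t).
Proof.
move=> tS; split.
  exists (fun k => (k == t)%:R); split; first by move=> k; rewrite ler0n.
  split; rewrite (bigD1 t) //= eqxx ?scale1r big1 ?addr0 // => k /negbTE ->.
    by [].
  by rewrite scale0r.
move=> i iS; have [_ [v_facet _]] := normals i.
by apply: v_facet; apply: contraNneq tS => ->.
Qed.

(* A point on the flat has vanishing barycentric coordinates on the vertices
   [v i], [i \in S], since these are the vertices off the facets of [S]. *)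
Lemma affine_hull_faceP (S : {set 'I_n.+1}) (a z : 'rV[R]_n) :
  affine_hull (face v u c S) a ->
  (forall i, i \in S -> dot z (u i) = c i) -> affine_hull (face v u c S) z.
Proof.
move=> [r [p [l' [face_p [sum_l' _]]]]] z_flat.
have [q face_q] : exists q, face v u c S q.
  case: r p l' face_p sum_l' => [|r] p l' face_p; last by exists (p ord0).
  by rewrite big_ord0 => /eqP; rewrite eq_sym oner_eq0.
have [l [sum_l zE]] := barycentric_coords z.
have l_S i : i \in S -> l i = 0.
  move=> iS; have [_ [v_facet v_off]] := normals i.
  have := z_flat i iS; rewrite zE dot_suml (bigD1 i) //= dotZl.
  rewrite (eq_bigr (fun k => l k * c i)) -?mulr_suml; last first.
    by move=> k ki; rewrite dotZl v_facet.
  have -> : \sum_(k | k != i) l k = 1 - l i by move: sum_l; rewrite (bigD1 i) //=; lra.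
  move=> h; have /eqP : l i * (dot (v i) (u i) - c i) = 0 by rewrite mulrBr; lra.
  by rewrite mulf_eq0 subr_eq0 (lt_eqF v_off) orbF => /eqP.
exists n.+1, (fun t => if t \in S then q else v t), l; split.
  by move=> t; case: ifPn => // /vertex_in_face.
split=> //; rewrite zE; apply: eq_bigr => t _.
by case: ifP => // tS; rewrite l_S // !scale0r.
Qed.

Lemma nearest_point_normal (S : {set 'I_n.+1}) (a b : 'rV[R]_n) :
  pairwise_orthogonal u S -> affine_hull (face v u c S) a ->
  (forall y, affine_hull (face v u c S) y ->
     dot (a - b) (a - b) <= dot (y - b) (y - b)) ->
  b - a = \sum_(i in S) (dot b (u i) - c i) *: u i.
Proof.
move=> orthS hull_a a_min.
set s := \sum_(i in S) _.
have y_flat j : j \in S -> dot (b - s) (u j) = c j.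
  move=> jS; rewrite dotBl dot_suml (bigD1 j) //= big1 ?addr0.
    by rewrite dotZl; have [-> _] := normals j; rewrite mulr1; lra.
  by move=> i /andP [iS ij]; rewrite dotZl orthS ?mulr0.
have ya_s_orth : dot (a - (b - s)) (- s) = 0.
  rewrite dotC dotNl dot_suml big1 ?oppr0 // => i iS.
  by rewrite dotZl (dotC (u i)) dotBl (affine_hull_face_dot hull_a iS) y_flat ?subrr ?mulr0.
have := a_min _ (affine_hull_faceP hull_a y_flat).
have -> : a - b = (a - (b - s)) + (b - s - b) by rewrite addrA subrK.
have -> : b - s - b = - s by rewrite addrAC subrr add0r.
rewrite dotDD ya_s_orth mulr0 addr0 => le_s.
have /dot_eq0/eqP : dot (a - (b - s)) (a - (b - s)) = 0.
  by have := dot_ge0 (a - (b - s)); lra.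
by rewrite subr_eq0 => /eqP ->; rewrite opprB addrC subrK.
Qed.

End FaceHull.

Lemma point_reflection_restricts (R : realType) (n : nat) (x0 x1 p : 'rV[R]_n)
    (w : 'rV[R]_n -> 'rV[R]_n) :
  line_through x0 x1 p ->
  (forall z, line_through x0 x1 z -> w z = 2 *: p - z) ->
  restricts_to_reflection_fixing w (line_through x0 x1) p.
Proof.
move=> [tp _ p_def] w_refl.
have L_refl y : line_through x0 x1 y -> line_through x0 x1 (2 *: p - y).
  case=> t _ <-; exists (2 * tp - t) => //.
  by rewrite -p_def; apply/rowP => j; rewrite !mxE; ring.
have invol y : 2 *: p - (2 *: p - y) = y by rewrite opprB addrC subrK.
have Lp : line_through x0 x1 p by exists tp.
split; [|split=> //]; apply/seteqP; split.
- by move=> _ [y Ly <-]; rewrite w_refl //; apply: L_refl.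
- move=> y Ly; exists (2 *: p - y); first exact: L_refl.
  by rewrite w_refl ?invol //; apply: L_refl.
- move=> y [Ly]; rewrite w_refl // => /rowP fix_y; apply/rowP => j.
  by have := fix_y j; rewrite !mxE; lra.
- move=> y ->; split=> //.
  by rewrite w_refl //; apply/rowP => j; rewrite !mxE; ring.
Qed.

Theorem lemma8p7 (R : realType) (n : nat) (v u : 'I_n.+1 -> 'rV[R]_n)
  (c : 'I_n.+1 -> R) (m : 'I_n.+1 -> 'I_n.+1 -> nat) (S0 : {set 'I_n.+1})
  (x0 x1 : 'rV[R]_n) :
  affinely_independent v ->
  facet_normals v u c ->
  coxeter_angles u m ->
  irreducible_diagram m ->
  ~ type_tildeA m ->
  is_bipartition m S0 ->
  let B0 := affine_hull (face v u c S0) in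
  let B1 := affine_hull (face v u c (~: S0)) in
  B0 x0 -> B1 x1 ->
  (forall y0 y1, B0 y0 -> B1 y1 -> eucl_dist x0 x1 <= eucl_dist y0 y1) ->
  let L := line_through x0 x1 in
  restricts_to_reflection_fixing (bip_inv u c S0) L x0 /\
  restricts_to_reflection_fixing (bip_inv u c (~: S0)) L x1.
Proof.
move=> indep_v normals angles _ _ bip B0 B1 B0x0 B1x1 nearest L.
have unit_u i : dot (u i) (u i) = 1 by have [] := normals i.
have orth0 : pairwise_orthogonal u S0.
  by apply: (bipartition_pairwise_orthogonal unit_u angles bip) => i j -> ->.
have orth1 : pairwise_orthogonal u (~: S0).
  apply: (bipartition_pairwise_orthogonal unit_u angles bip) => i j.
  by rewrite !inE => /negbTE -> /negbTE ->.
have x1_normal := nearest_point_normal indep_v normals orth0 B0x0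
  (fun y By => eucl_dist_le (nearest y x1 By B1x1)).
have x0_normal : x0 - x1 = \sum_(i in ~: S0) (dot x0 (u i) - c i) *: u i.
  apply: (nearest_point_normal indep_v normals orth1 B1x1) => y By.
  rewrite -dotNN opprB -(dotNN (y - x0)) opprB.
  exact/eucl_dist_le/nearest.
split; apply: point_reflection_restricts.
- by exists 0; rewrite // scale0r addr0.
- move=> z [t _ <-].
  exact: bip_inv_normal_line orth0 (fun i => affine_hull_face_dot B0x0) x1_normal _.
- by exists 1; rewrite // scale1r addrC subrK.
- move=> z [t _ <-].
  apply: (bip_inv_normal_line (t := 1 - t)) orth1
    (fun i => affine_hull_face_dot B1x1) x0_normal _.
  by apply/rowP => j; rewrite !mxE; ring.
Qed.
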